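(* Let $\Sigma$ be any set of $\mathscr{L}$-sentences. Then $\mathcal{M}_\Sigma$ satisfies the axioms of Peano arithmetic for $\mathscr{L}$.
   Context: $\mathscr{L}$ is the language of Peano arithmetic (variables, constant $0$, unary $S$, binary $+$, $\cdot$) extended by a unary modal operator $K$: whenever $\phi$ is a formula, $K\phi$ is a formula (called purely modal). An $\mathscr{L}$-structure consists of a first-order structure for the arithmetic part together with a truth value for each purely modal formula $K\phi$ and each assignment $s$ of the variables (satisfying the standard constraints: independence from variables not free in $\phi$, invariance under alphabetic variants, and weak substitution of variables for variables); satisfaction is extended inductively to all formulas. For a set $\Sigma$ of sentences, $\Sigma\models\phi$ means every $\mathscr{L}$-structure satisfying all members of $\Sigma$ satisfies $\phi$ under all assignments. For a formula $\phi$ and an assignment $s$ into $\mathbb{N}$, $\phi^s$ is the sentence obtained by replacing each free variable $x$ of $\phi$ by the numeral $\overline{s(x)}$. $\mathcal{M}_\Sigma$ is the $\mathscr{L}$-structure with universe $\mathbb{N}$, arithmetic symbols interpreted as usual, and $\mathcal{M}_\Sigma\models K\phi[s]$ iff $\Sigma\models\phi^s$. The axioms of Peano arithmetic for $\mathscr{L}$ are: $\forall x(S(x)\neq 0)$; $\forall x\forall y(S(x)=S(y)\rightarrow x=y)$; $\forall x(x+0=x)$; $\forall x\forall y(x+S(y)=S(x+y))$; $\forall x(x\cdot 0=0)$; $\forall x\forall y(x\cdot S(y)=x\cdot y+x)$; and the universal closure of $\phi(x|0)\rightarrow(\forall x(\phi\rightarrow\phi(x|S(x))))\rightarrow\forall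 x\phi$ for every $\mathscr{L}$-formula $\phi$ (which may contain $K$). *)

From Stdlib Require Import Arith List Bool.
Import ListNotations.

Inductive term : Type :=
| Tvar  : nat -> term
| Tzero : term
| Tsucc : term -> term
| Tplus : term -> term -> term
| Tmult : term -> term -> term.

Inductive form : Type :=
| Feq     : term -> term -> form
| Fnot    : form -> form
| Fimp    : form -> form -> form
| Fforall : nat -> form -> form
| FK      : form -> form.

Fixpoint tvars (t : term) : list nat :=
  match t with
  | Tvar x => [x]
  | Tzero => []
  | Tsucc t => tvars t
  | Tplus t u | Tmult t u => tvars t ++ tvars u
  end.

Fixpoint fv (phi : form) : list nat :=
  match phi with
  | Feq t u => tvars t ++ tvars u
  | Fnot p => fv p
  | Fimp p q => fv p ++ fv q
  | Fforall x p => filter (fun y => negb (Nat.eqb y x)) (fv p)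
  | FK p => fv p
  end.

Definition free (x : nat) (phi : form) : Prop := In x (fv phi).
Definition sentence (phi : form) : Prop := fv phi = [].

(* It is capture-avoiding whenever the substituted
   terms are substitutable (see [substitutable]); in particular for closed terms. *)
Fixpoint tsubst (sigma : nat -> term) (t : term) : term :=
  match t with
  | Tvar x => sigma x
  | Tzero => Tzero
  | Tsucc t => Tsucc (tsubst sigma t)
  | Tplus t u => Tplus (tsubst sigma t) (tsubst sigma u)
  | Tmult t u => Tmult (tsubst sigma t) (tsubst sigma u)
  end.

Fixpoint fsubst (sigma : nat -> term) (phi : form) : form :=
  match phi with
  | Feq t u => Feq (tsubst sigma t) (tsubst sigma u)
  | Fnot p => Fnot (fsubst sigma p)
  | Fimp p q => Fimp (fsubst sigma p) (fsubst sigma q)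
  | Fforall x p =>
      Fforall x (fsubst (fun y => if Nat.eqb y x then Tvar x else sigma y) p)
  | FK p => FK (fsubst sigma p)
  end.

Definition subst1 (x : nat) (t : term) (phi : form) : form :=
  fsubst (fun y => if Nat.eqb y x then t else Tvar y) phi.

Fixpoint substitutable (t : term) (x : nat) (phi : form) : Prop :=
  match phi with
  | Feq _ _ => True
  | Fnot p => substitutable t x p
  | Fimp p q => substitutable t x p /\ substitutable t x q
  | Fforall z p =>
      z = x \/ ((~ free x p \/ ~ In z (tvars t)) /\ substitutable t x p)
  | FK p => substitutable t x p
  end.

(* Alphabetic variants: formulas with the same nameless (de Bruijn) form. *)
Inductive dbvar : Type := Bound : nat -> dbvar | Free : nat -> dbvar.

Inductive dbterm : Type :=
| DBvar  : dbvar -> dbterm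
| DBzero : dbterm
| DBsucc : dbterm -> dbterm
| DBplus : dbterm -> dbterm -> dbterm
| DBmult : dbterm -> dbterm -> dbterm.

Inductive dbform : Type :=
| DBeq  : dbterm -> dbterm -> dbform
| DBnot : dbform -> dbform
| DBimp : dbform -> dbform -> dbform
| DBall : dbform -> dbform
| DBK   : dbform -> dbform.

Fixpoint lookup (ctx : list nat) (x : nat) (i : nat) : dbvar :=
  match ctx with
  | [] => Free x
  | y :: ctx' => if Nat.eqb x y then Bound i else lookup ctx' x (S i)
  end.

Fixpoint term_db (ctx : list nat) (t : term) : dbterm :=
  match t with
  | Tvar x => DBvar (lookup ctx x 0)
  | Tzero => DBzero
  | Tsucc t => DBsucc (term_db ctx t)
  | Tplus t u => DBplus (term_db ctx t) (term_db ctx u)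
  | Tmult t u => DBmult (term_db ctx t) (term_db ctx u)
  end.

Fixpoint form_db (ctx : list nat) (phi : form) : dbform :=
  match phi with
  | Feq t u => DBeq (term_db ctx t) (term_db ctx u)
  | Fnot p => DBnot (form_db ctx p)
  | Fimp p q => DBimp (form_db ctx p) (form_db ctx q)
  | Fforall x p => DBall (form_db (x :: ctx) p)
  | FK p => DBK (form_db ctx p)
  end.

Definition alphabetic_variant (phi psi : form) : Prop :=
  form_db [] phi = form_db [] psi.

(* Pre-structures: arithmetic part plus a truth value for each purely modal
   formula K phi under each assignment (kval phi s <-> "K phi is true at s"). *)
Record prestructure : Type := {
  dom   : Type;
  zero  : dom;
  succ  : dom -> dom;
  plus  : dom -> dom -> dom;
  mult  : dom -> dom -> dom;
  kval  : form -> (nat -> dom) -> Prop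
}.

Definition upd {D : Type} (s : nat -> D) (x : nat) (d : D) : nat -> D :=
  fun y => if Nat.eqb y x then d else s y.

Fixpoint teval (M : prestructure) (s : nat -> dom M) (t : term) : dom M :=
  match t with
  | Tvar x => s x
  | Tzero => zero M
  | Tsucc t => succ M (teval M s t)
  | Tplus t u => plus M (teval M s t) (teval M s u)
  | Tmult t u => mult M (teval M s t) (teval M s u)
  end.

Fixpoint sat (M : prestructure) (s : nat -> dom M) (phi : form) : Prop :=
  match phi with
  | Feq t u => teval M s t = teval M s u
  | Fnot p => ~ sat M s p
  | Fimp p q => sat M s p -> sat M s q
  | Fforall x p => forall d : dom M, sat M (upd s x d) p
  | FK p => kval M p s
  end.

Definition is_Lstructure (M : prestructure) : Prop :=
  (forall phi (s s' : nat -> dom M),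
      (forall x, free x phi -> s x = s' x) -> (kval M phi s <-> kval M phi s')) /\
  (forall phi psi (s : nat -> dom M),
      alphabetic_variant phi psi -> (kval M phi s <-> kval M psi s)) /\
  (forall phi x y (s : nat -> dom M),
      substitutable (Tvar y) x phi ->
      (kval M (subst1 x (Tvar y) phi) s <-> kval M phi (upd s x (s y)))).

Definition entails (Sigma : form -> Prop) (phi : form) : Prop :=
  forall M : prestructure, is_Lstructure M ->
    (forall sigma, Sigma sigma -> forall s, sat M s sigma) ->
    forall s, sat M s phi.

Fixpoint numeral (n : nat) : term :=
  match n with
  | 0 => Tzero
  | S n => Tsucc (numeral n)
  end.

Definition instantiate (s : nat -> nat) (phi : form) : form :=
  fsubst (fun x => numeral (s x)) phi.

Definition M_Sigma (Sigma : form -> Prop) : prestructure := {|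
  dom := nat;
  zero := 0;
  succ := S;
  plus := Nat.add;
  mult := Nat.mul;
  kval := fun phi s => entails Sigma (instantiate s phi)
|}.

Definition univ_closure (phi : form) : form :=
  fold_right Fforall phi (fv phi).

Definition vx := Tvar 0.
Definition vy := Tvar 1.

Definition PA_axiom (A : form) : Prop :=
  A = Fforall 0 (Fnot (Feq (Tsucc vx) Tzero)) \/
  A = Fforall 0 (Fforall 1 (Fimp (Feq (Tsucc vx) (Tsucc vy)) (Feq vx vy))) \/
  A = Fforall 0 (Feq (Tplus vx Tzero) vx) \/
  A = Fforall 0 (Fforall 1 (Feq (Tplus vx (Tsucc vy)) (Tsucc (Tplus vx vy)))) \/
  A = Fforall 0 (Feq (Tmult vx Tzero) Tzero) \/
  A = Fforall 0 (Fforall 1 (Feq (Tmult vx (Tsucc vy)) (Tplus (Tmult vx vy) vx))) \/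
  (exists (phi : form) (x : nat),
      A = univ_closure
            (Fimp (subst1 x Tzero phi)
                  (Fimp (Fforall x (Fimp phi (subst1 x (Tsucc (Tvar x)) phi)))
                        (Fforall x phi)))).

(* The equational axioms hold in the standard model of arithmetic; only the
   induction scheme needs work.  In [M_Sigma] the value of [K phi] at
   [s] is the entailment of the closed instance [phi^s], so the one non-trivial
   fact is the substitution lemma [M |= phi(x|t) [s] <-> M |= phi [s(x|t^s)]]
   for the terms [t = 0] and [t = S x].  For [K phi] it reduces to the syntactic
   identity [(phi(x|t))^s = phi^(s(x|t^s))]: a substitution sending each
   variable [y] to a successor term in [y] alone commutes with quantifiers
   exactly like the numeral substitution does, so the two compose. *)
From Stdlib Require Import Arith List FunctionalExtensionality Lia.

Fixpoint unary_term (t : term) : Prop :=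
  match t with
  | Tvar _ | Tzero => True
  | Tsucc t => unary_term t
  | _ => False
  end.

Definition local_subst (tau : nat -> term) : Prop :=
  forall y v, In v (tvars (tau y)) -> v = y.

Definition unary_subst (tau : nat -> term) : Prop :=
  forall y, unary_term (tau y).

(* The substitution [fsubst] uses under [Fforall x]. *)
Definition subst_bind (x : nat) (tau : nat -> term) : nat -> term :=
  fun y => if Nat.eqb y x then Tvar x else tau y.

Lemma local_subst_bind x tau : local_subst tau -> local_subst (subst_bind x tau).
Proof.
  intros Htau y v; unfold subst_bind; destruct (Nat.eqb_spec y x) as [-> | _].
  - now intros [<- | []].
  - apply Htau.
Qed.

Lemma unary_subst_bind x tau : unary_subst tau -> unary_subst (subst_bind x tau).
Proof. intros Htau y; unfold subst_bind; destruct (Nat.eqb y x); simpl; auto. Qed.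

Lemma tsubst_agree (s1 s2 : nat -> term) t :
  (forall v, In v (tvars t) -> s1 v = s2 v) -> tsubst s1 t = tsubst s2 t.
Proof.
  induction t; simpl; intros H; f_equal; auto using in_or_app.
Qed.

Lemma tsubst_tsubst sigma tau t :
  tsubst sigma (tsubst tau t) = tsubst (fun y => tsubst sigma (tau y)) t.
Proof. induction t; simpl; congruence. Qed.

Lemma fsubst_fsubst p : forall sigma tau, local_subst tau ->
  fsubst sigma (fsubst tau p) = fsubst (fun y => tsubst sigma (tau y)) p.
Proof.
  induction p; intros sigma tau Htau; simpl; rewrite ?tsubst_tsubst;
    try (f_equal; auto; fail).
  f_equal; rewrite (IHp _ (subst_bind n tau)) by now apply local_subst_bind.
  f_equal; extensionality y; unfold subst_bind.
  destruct (Nat.eqb_spec y n) as [-> | Hyn]; simpl.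
  - now rewrite Nat.eqb_refl.
  - apply tsubst_agree; intros v Hv; rewrite (Htau y v Hv).
    now destruct (Nat.eqb_spec y n).
Qed.

Lemma teval_agree M (s1 s2 : nat -> dom M) t :
  (forall v, In v (tvars t) -> s1 v = s2 v) -> teval M s1 t = teval M s2 t.
Proof.
  induction t; simpl; intros H; f_equal; auto using in_or_app.
Qed.

Lemma teval_tsubst M (s : nat -> dom M) tau t :
  teval M s (tsubst tau t) = teval M (fun y => teval M s (tau y)) t.
Proof. induction t; simpl; congruence. Qed.

Lemma tsubst_numeral Sigma s t : unary_term t ->
  tsubst (fun x => numeral (s x)) t = numeral (teval (M_Sigma Sigma) s t).
Proof. induction t; simpl; try tauto; intros Ht; now rewrite IHt. Qed.

Lemma instantiate_fsubst Sigma s tau p :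
  local_subst tau -> unary_subst tau ->
  instantiate s (fsubst tau p) =
  instantiate (fun y => teval (M_Sigma Sigma) s (tau y)) p.
Proof.
  intros Hloc Hun; unfold instantiate; rewrite fsubst_fsubst by exact Hloc.
  f_equal; extensionality y; now apply tsubst_numeral.
Qed.

Lemma sat_fsubst Sigma p : forall s tau, local_subst tau -> unary_subst tau ->
  (sat (M_Sigma Sigma) s (fsubst tau p) <->
   sat (M_Sigma Sigma) (fun y => teval (M_Sigma Sigma) s (tau y)) p).
Proof.
  induction p; intros s tau Hloc Hun; simpl.
  - now rewrite !teval_tsubst.
  - now rewrite IHp.
  - now rewrite IHp1, IHp2.
  - assert (Hupd : forall d : nat,
      (fun y => teval (M_Sigma Sigma) (upd s n d) (subst_bind n tau y)) =
      upd (fun y => teval (M_Sigma Sigma) s (tau y)) n d).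
    { intros d; extensionality y; unfold subst_bind, upd.
      destruct (Nat.eqb_spec y n) as [-> | Hyn]; simpl.
      - now rewrite Nat.eqb_refl.
      - apply (teval_agree (M_Sigma Sigma)); intros v Hv; rewrite (Hloc y v Hv).
        now destruct (Nat.eqb_spec y n). }
    split; intros H d; specialize (H d); rewrite <- Hupd in *;
      [ apply (IHp _ (subst_bind n tau)) | apply (IHp _ (subst_bind n tau)) in H ];
      auto using local_subst_bind, unary_subst_bind.
  - now rewrite (instantiate_fsubst Sigma) by assumption.
Qed.

Lemma sat_subst1 Sigma s x t phi :
  unary_term t -> (forall v, In v (tvars t) -> v = x) ->
  (sat (M_Sigma Sigma) s (subst1 x t phi) <->
   sat (M_Sigma Sigma) (upd s x (teval (M_Sigma Sigma) s t)) phi).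
Proof.
  intros Hun Hvars; unfold subst1; rewrite sat_fsubst.
  - replace (fun y => _) with (upd s x (teval (M_Sigma Sigma) s t)); [reflexivity|].
    extensionality y; unfold upd; now destruct (Nat.eqb y x).
  - intros y v; destruct (Nat.eqb_spec y x) as [-> | _]; [apply Hvars|].
    now intros [<- | []].
  - intros y; destruct (Nat.eqb y x); simpl; auto.
Qed.

Lemma upd_upd {D : Type} (s : nat -> D) x d e : upd (upd s x d) x e = upd s x e.
Proof. extensionality y; unfold upd; now destruct (Nat.eqb y x). Qed.

Lemma upd_eq {D : Type} (s : nat -> D) x d : upd s x d x = d.
Proof. unfold upd; now rewrite Nat.eqb_refl. Qed.

Lemma sat_induction_instance Sigma phi x s :
  sat (M_Sigma Sigma) s
    (Fimp (subst1 x Tzero phi)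
          (Fimp (Fforall x (Fimp phi (subst1 x (Tsucc (Tvar x)) phi)))
                (Fforall x phi))).
Proof.
  simpl; intros Hzero Hstep d.
  rewrite sat_subst1 in Hzero by (simpl; tauto).
  induction d as [| d IHd]; [exact Hzero|].
  specialize (Hstep d IHd).
  rewrite sat_subst1 in Hstep by (simpl; auto; now intros v [<- | []]).
  simpl in Hstep; now rewrite upd_upd, upd_eq in Hstep.
Qed.

Lemma sat_fold_Fforall M phi l :
  (forall s, sat M s phi) -> forall s, sat M s (fold_right Fforall phi l).
Proof. induction l; simpl; auto. Qed.

Theorem lemma11 (Sigma : form -> Prop)
  (HSigma : forall phi, Sigma phi -> sentence phi) :
  forall A : form, PA_axiom A ->
    forall s : nat -> nat, sat (M_Sigma Sigma) s A.
Proof.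
  intros A HA.
  destruct HA as [-> | [-> | [-> | [-> | [-> | [-> | [phi [x ->]]]]]]]];
    intros s; simpl; unfold upd; simpl; intros; try lia.
  apply sat_fold_Fforall, sat_induction_instance.
Qed.
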